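(* Let $\ell\geq 1$ and let $G\subseteq\mathcal{G}_\Sigma^\ell$ be a non-empty finite set of generalized strings of length $\ell$. Then $\mathrm{NFA}(G)$ is a simple NFA.
   Context: For a finite alphabet $\Sigma$, $\mathcal{G}_\Sigma=\mathcal{P}(\Sigma)\setminus\{\emptyset\}$ and a generalized string is a finite string $g=g[1]\cdots g[|g|]$ over $\mathcal{G}_\Sigma$; $\mathcal{G}_\Sigma^\ell$ is the set of generalized strings of length $\ell$. Construction of $\mathrm{NFA}(G)$: let $\bar Q=\mathcal{P}(G)\times\{0,\dots,\ell\}$ and define $\mathrm{Parent}:\bar Q\times\Sigma\to\bar Q\cup\{\bot\}$ by $\mathrm{Parent}((H,k),\sigma)=(\{h\in H:\sigma\in h[k]\},k-1)$ if $k>0$ and $\bot$ if $k=0$. Set $Q_\ell=\{(G,\ell)\}$ and, for $i=\ell-1,\dots,0$, $Q_i=\{(H,i): H\subseteq G,\ H\neq\emptyset,\ \exists q\in Q_{i+1},\sigma\in\Sigma \text{ with } \mathrm{Parent}(q,\sigma)=(H,i)\}$. Let $Q=Q_0\cup\dots\cup Q_\ell$, $\Delta((H,k),\sigma)=\{q\in Q_{k+1}:\mathrm{Parent}(q,\sigma)=(H,k)\}$ if $k<\ell$ and $\emptyset$ if $k=\ell$, $Q_\alpha=Q_0$, $F=Q_\ell$. Then $\mathrm{NFA}(G)=(Q,\Sigma,\Delta,Q_\alpha,F)$. For an NFA, $\hat\Delta$ is the extension of $\Delta$ to strings ($\hat\Delta(q,\varepsilon)=\{q\}$, $\hat\Delta(q,\sigma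 s)=\bigcup_{p\in\Delta(q,\sigma)}\hat\Delta(p,s)$), the language of a state is $\mathcal{L}(q)=\{s\in\Sigma^*:\hat\Delta(q,s)\cap F\neq\emptyset\}$, and a state $q$ is accessible if $q\in\hat\Delta(q_\alpha,s)$ for some $q_\alpha\in Q_\alpha$, $s\in\Sigma^*$. An NFA is called simple if all its states are accessible and the languages $\mathcal{L}(q)$, $q\in Q$, are non-empty and pairwise disjoint. *)

From mathcomp Require Import all_boot.
Set Implicit Arguments. Unset Strict Implicit. Unset Printing Implicit Defensive.

Record nfa (S Sigma : finType) := NFA {
  states : {set S};
  delta  : S -> Sigma -> {set S};
  starts : {set S};
  finals : {set S} }.

Section NFA.
Variables (S Sigma : finType) (A : nfa S Sigma).

Fixpoint delta_hat (q : S) (s : seq Sigma) : {set S} :=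
  match s with
  | [::] => [set q]
  | a :: s' => \bigcup_(p in delta A q a) delta_hat p s'
  end.

Definition lang (q : S) (s : seq Sigma) : bool :=
  delta_hat q s :&: finals A != set0.

Definition accessible (q : S) : Prop :=
  exists qa s, qa \in starts A /\ q \in delta_hat qa s.

Definition simple_nfa : Prop :=
  (forall q, q \in states A -> accessible q) /\
  (forall q, q \in states A -> exists s, lang q s) /\
  (forall q q', q \in states A -> q' \in states A -> q != q' ->
     forall s, ~~ (lang q s && lang q' s)).
End NFA.

Section Construction.
Variables (Sigma : finType) (l : nat).

(* generalized strings of length l: l-tuples of subsets of Sigma
   (non-emptiness of letters is imposed as a hypothesis on G) *)
Definition gstr := (l.-tuple {set Sigma})%type.

(* 1-based letter access: g[k] *)
Definition gchar (g : gstr) (k : nat) : {set Sigma} := nth set0 g k.-1.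

(* carrier of states: P(G) x {0..l} (subsets of all gstr; Q only uses subsets of G) *)
Definition gstate := ({set gstr} * 'I_l.+1)%type.

Definition parentH (H : {set gstr}) (k : nat) (a : Sigma) : {set gstr} :=
  [set h in H | a \in gchar h k].

Definition Parent (q : gstate) (a : Sigma) : option gstate :=
  match val q.2 with
  | 0 => None
  | k.+1 => Some (parentH q.1 k.+1 a, inord k)
  end.

Variable G : {set gstr}.

(* Qd d = the first components of Q_{l-d} *)
Fixpoint Qd (d : nat) : {set {set gstr}} :=
  match d with
  | 0 => [set G]
  | d'.+1 => [set H | (H != set0) && (H \subset G) &&
               [exists H' in Qd d', exists a, parentH H' (l - d') a == H]]
  end.

Definition Qset : {set gstate} := [set q : gstate | q.1 \in Qd (l - q.2)].

Definition Qlevel (i : nat) : {set gstate} := [set q in Qset | val q.2 == i].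

Definition Delta (q : gstate) (a : Sigma) : {set gstate} :=
  if val q.2 < l then [set p in Qlevel (val q.2).+1 | Parent p a == Some q]
  else set0.

Definition NFA_of : nfa gstate Sigma := NFA Qset Delta (Qlevel 0) (Qlevel l).
End Construction.

From mathcomp Require Import all_boot.
Set Implicit Arguments. Unset Strict Implicit. Unset Printing Implicit Defensive.

(* Every transition of NFA(G) goes from [Parent p a] to [p], so a word read
   backwards from a state determines the state it was started from; as (G, l)
   is the only final state, distinct states have disjoint languages.  A state
   at level k < l lies in Q_k only because it is the parent of some state at
   level k + 1, hence every state reaches (G, l).  Conversely, a state (H, k+1)
   is a successor of its parent along any letter of h[k+1] with h in H; that
   parent is again a state because the letters of h are non-empty, so every
   state is accessible. *)

Section Runs.
Variables (S Sigma : finType) (A : nfa S Sigma).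

Lemma delta_hat_cons q p p' a s :
  p \in delta A q a -> p' \in delta_hat A p s -> p' \in delta_hat A q (a :: s).
Proof. by move=> qp pp'; apply/bigcupP; exists p. Qed.

Lemma delta_hat_rcons q p p' s a :
  p \in delta_hat A q s -> p' \in delta A p a -> p' \in delta_hat A q (rcons s a).
Proof.
elim: s q => [|b s IH] q /=.
  by rewrite inE => /eqP -> pp'; apply/bigcupP; exists p'; rewrite ?set11.
by case/bigcupP=> q1 qq1 q1p pp'; apply: delta_hat_cons qq1 (IH _ q1p pp').
Qed.

Variable parent : S -> Sigma -> option S.
Hypothesis delta_parent : forall q a p, p \in delta A q a -> parent p a = Some q.

Fixpoint unwind (p : S) (s : seq Sigma) : option S :=
  if s is a :: s' then obind (parent^~ a) (unwind p s') else Some p.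

Lemma unwind_delta_hat s q p : p \in delta_hat A q s -> unwind p s = Some q.
Proof.
elim: s q => [|a s IH] q /=; first by rewrite inE => /eqP ->.
by case/bigcupP=> q1 qq1 /IH ->; apply: delta_parent.
Qed.

Lemma lang_disjoint q q' s :
  (forall f f', f \in finals A -> f' \in finals A -> f = f') ->
  lang A q s -> lang A q' s -> q = q'.
Proof.
move=> final_uniq /set0Pn[f] /setIP[qf Ff] /set0Pn[f'] /setIP[q'f' Ff'].
move: (unwind_delta_hat qf) (unwind_delta_hat q'f').
by rewrite (final_uniq f f') // => -> [].
Qed.

End Runs.

Section Construction.
Variables (Sigma : finType) (l : nat) (G : {set gstr Sigma l}).

Lemma mem_Delta q p a :
  (p \in Delta G q a) =
  [&& p \in Qset G, val p.2 == (val q.2).+1 & parentH p.1 (val q.2).+1 a == q.1].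
Proof.
rewrite /Delta; case: ltnP => [_|le_l_q]; last first.
  by rewrite inE ltn_eqF ?andbF // (leq_trans (ltn_ord p.2)).
rewrite inE [_ \in Qlevel _ _]inE -andbA; case: (p \in Qset G) => //=.
case: p => H' [j lt_j] /=; case: eqP => //= j_eq; subst j; case: q lt_j => H i lt_j /=.
by rewrite (inj_eq (@Some_inj _)) xpair_eqE inord_val eqxx andbT.
Qed.

Lemma Delta_Parent q a p : p \in Delta G q a -> Parent p a = Some q.
Proof.
rewrite mem_Delta => /and3P[_ /eqP p2 /eqP pq].
by rewrite /Parent p2 pq inord_val -surjective_pairing.
Qed.

Lemma Qlevel_top : Qlevel G l = [set (G, ord_max)].
Proof.
apply/setP=> [[H i]]; rewrite !inE xpair_eqE /=.
case: (eqVneq i ord_max) => [->|ne_i_max]; first by rewrite subnn inE eqxx andbT.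
by rewrite andbF -[val i == l]/(i == ord_max) (negbTE ne_i_max) andbF.
Qed.

Lemma Qset_child q : q \in Qset G -> val q.2 < l -> exists a p, p \in Delta G q a.
Proof.
move=> Qq lt_q_l; move: Qq; rewrite inE -(subnSK lt_q_l) /= inE.
case/andP=> _ /existsP[H' /andP[QH' /existsP[a /eqP H'q]]].
have lt_q1_l1 : (val q.2).+1 < l.+1 by [].
exists a, (H', Ordinal lt_q1_l1).
by rewrite mem_Delta inE /= QH' -H'q subKn // !eqxx.
Qed.

Lemma reach_top q : q \in Qset G -> exists s, (G, ord_max) \in delta_hat (NFA_of G) q s.
Proof.
move dq: (l - val q.2) => n; elim: n q dq => [|n IH] q dq Qq.
  have : q \in Qlevel G l by rewrite inE Qq eqn_leq leq_ord -subn_eq0 dq.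
  by rewrite Qlevel_top => /set1P ->; exists [::]; rewrite set11.
have lt_q_l : val q.2 < l by rewrite -subn_gt0 dq.
have [a [p qp]] := Qset_child Qq lt_q_l.
move: (qp); rewrite mem_Delta => /and3P[Qp /eqP p2 _].
have [s ps] : exists s, (G, ord_max) \in delta_hat (NFA_of G) p s.
  by apply: IH Qp; rewrite p2 subnS dq.
exists (a :: s); exact: (delta_hat_cons (A := NFA_of G)) qp ps.
Qed.

Lemma Qd_sub d H : H \in Qd G d -> H \subset G.
Proof. by case: d => [|d] /=; rewrite inE; [move/eqP-> | case/andP=> /andP[]]. Qed.

Hypothesis G_neq0 : G != set0.

Lemma Qd_neq0 d H : H \in Qd G d -> H != set0.
Proof. by case: d => [|d] /=; rewrite inE; [move/eqP-> | case/andP=> /andP[]]. Qed.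

Hypothesis letters_neq0 : forall g, g \in G -> set0 \notin (g : seq {set Sigma}).

Lemma Qset_parent q k : q \in Qset G -> val q.2 = k.+1 ->
  exists a p, p \in Qset G /\ q \in Delta G p a.
Proof.
move=> Qq q2; have lt_k_l : k < l by rewrite -ltnS -q2 ltn_ord.
have Qdq : q.1 \in Qd G (l - k.+1) by rewrite inE q2 in Qq.
have [g qg] := set0Pn _ (Qd_neq0 Qdq).
have Gg : g \in G := subsetP (Qd_sub Qdq) g qg.
have [a ga] : exists a, a \in gchar g k.+1.
  apply/set0Pn; apply: contraNneq (letters_neq0 Gg) => <-.
  by rewrite mem_nth // size_tuple.
have lt_k_l1 : k < l.+1 by rewrite ltnW.
exists a, (parentH q.1 k.+1 a, Ordinal lt_k_l1); split; last first.
  by rewrite mem_Delta Qq q2 !eqxx.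
rewrite inE /= -(subnSK lt_k_l) /= inE -andbA; apply/and3P; split.
- by apply/set0Pn; exists g; rewrite inE qg.
- by apply: subset_trans (Qd_sub Qdq); apply/subsetP=> h; rewrite inE => /andP[].
- by apply/existsP; exists q.1; rewrite Qdq; apply/existsP; exists a; rewrite subKn.
Qed.

Lemma Qset_accessible q : q \in Qset G -> accessible (NFA_of G) q.
Proof.
move q2: (val q.2) => k; elim: k q q2 => [|k IH] q q2 Qq.
  by exists q, [::]; rewrite /= inE Qq q2 set11.
have [a [p [Qp pq]]] := Qset_parent Qq q2.
move: (pq); rewrite mem_Delta q2 eqSS => /and3P[_ /eqP p2 _].
have [qa [s [start_qa qa_p]]] := IH p (esym p2) Qp.
exists qa, (rcons s a); split => //.
exact: (delta_hat_rcons (A := NFA_of G)) qa_p pq.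
Qed.

End Construction.

Theorem mainTheorem6 (Sigma : finType) (l : nat) (G : {set gstr Sigma l}) :
  1 <= l -> G != set0 -> (forall g, g \in G -> set0 \notin (g : seq {set Sigma})) ->
  simple_nfa (NFA_of G).
Proof.
move=> _ G_neq0 letters_neq0; split; [|split].
- exact: Qset_accessible.
- move=> q /reach_top[s q_top]; exists s; apply/set0Pn; exists (G, ord_max).
  by rewrite inE q_top /= Qlevel_top set11.
- move=> q q' _ _ ne_qq' s; apply/negP=> /andP[lq lq'].
  have final_uniq f f' : f \in finals (NFA_of G) -> f' \in finals (NFA_of G) -> f = f'.
    by rewrite /= Qlevel_top => /set1P -> /set1P ->.
  have := lang_disjoint (A := NFA_of G) (@Delta_Parent _ _ G) final_uniq lq lq'.
  by move/eqP; rewrite (negbTE ne_qq').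
Qed.
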